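(* Let $C\subset\mathbb{R}^d$ be an open convex set and let $f,g:C\to[0,\infty)$ be DC functions on $C$ such that $0$ is a weakly regular value of both $f$ and $g$. If $f$ and $g$ do not touch weakly, then $f+g$ is a DC function on $C$ with $0$ as a weakly regular value.
   Context: A real function on an open convex set is DC if it is a difference of two convex functions. $\partial f(x)$ is the Clarke subgradient. A number $c$ is a weakly regular value of a locally Lipschitz $f$ if whenever $x_i\to x$, $f(x_i)>c=f(x)$ and $u_i\in\partial f(x_i)$, then $\liminf_i|u_i|>0$. For such $f$ on $C$ define $\widetilde{\mathrm{nor}}\,f:=\{(x,u/|u|):x\in C,\ f(x)=0,\ 0\ne u\in\partial f(x)\}$. Two such functions $f,g$ on $C$ touch weakly if there exists $(x,v)\in\widetilde{\mathrm{nor}}\,f$ with $(x,-v)\in\widetilde{\mathrm{nor}}\,g$. *)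

From HB Require Import structures.
From mathcomp Require Import all_boot all_order all_algebra.
From mathcomp Require Import reals.
Set Implicit Arguments. Unset Strict Implicit. Unset Printing Implicit Defensive.
Import Order.TTheory GRing.Theory Num.Theory.
Local Open Scope ring_scope.

Section Defs.
Variables (R : realType) (d : nat).
Notation V := 'rV[R]_d.

Definition dotv (u v : V) : R := \sum_(i < d) u 0 i * v 0 i.
Definition enorm (u : V) : R := Num.sqrt (dotv u u).

Definition is_open (C : V -> Prop) : Prop :=
  forall x, C x -> exists2 e : R, 0 < e & forall y, enorm (y - x) < e -> C y.

Definition is_convex (C : V -> Prop) : Prop :=
  forall x y (t : R), C x -> C y -> 0 <= t -> t <= 1 -> C (t *: x + (1 - t) *: y).

Definition convex_on (C : V -> Prop) (f : V -> R) : Prop :=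
  forall x y (t : R), C x -> C y -> 0 <= t -> t <= 1 ->
    f (t *: x + (1 - t) *: y) <= t * f x + (1 - t) * f y.

Definition DC (C : V -> Prop) (f : V -> R) : Prop :=
  exists g h : V -> R, [/\ convex_on C g, convex_on C h &
                          forall x, C x -> f x = g x - h x].

(* Clarke subgradient, defined via the Clarke directional derivative
     f°(x;v) = limsup_{y -> x, t -> 0+} (f (y + t v) - f y) / t,
   namely  u \in ∂f(x)  iff  <u,v> <= f°(x;v) for all v.
   "<u,v> <= limsup" is written out: for every eps > 0 and every
   delta > 0 the difference quotient exceeds <u,v> - eps at some
   (y,t) with |y - x| < delta and 0 < t < delta (y, y + t v in C). *)
Definition clarke_subdiff (C : V -> Prop) (f : V -> R) (x u : V) : Prop :=
  C x /\
  forall v : V, forall eps delta : R, 0 < eps -> 0 < delta ->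
    exists y : V, exists t : R,
      [/\ C y /\ C (y + t *: v), enorm (y - x) < delta, 0 < t, t < delta &
          dotv u v - eps < (f (y + t *: v) - f y) / t].

Definition cvg_to (xs : nat -> V) (x : V) : Prop :=
  forall e : R, 0 < e -> exists N, forall i, (N <= i)%N -> enorm (xs i - x) < e.

Definition liminf_pos (r : nat -> R) : Prop :=
  exists2 m : R, 0 < m & exists N, forall i, (N <= i)%N -> m <= r i.

Definition weakly_regular_value (C : V -> Prop) (f : V -> R) (c : R) : Prop :=
  forall (xs : nat -> V) (x : V) (us : nat -> V),
    C x -> (forall i, C (xs i)) -> cvg_to xs x ->
    (forall i, c < f (xs i)) -> f x = c ->
    (forall i, clarke_subdiff C f (xs i) (us i)) ->
    liminf_pos (fun i => enorm (us i)).

Definition wnor (C : V -> Prop) (f : V -> R) (x v : V) : Prop :=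
  C x /\ f x = 0 /\
  exists u : V, [/\ u != 0, clarke_subdiff C f x u & v = (enorm u)^-1 *: u].

Definition touch_weakly (C : V -> Prop) (f g : V -> R) : Prop :=
  exists x v : V, wnor C f x v /\ wnor C g x (- v).

End Defs.

From Pilot Require Import Defs.
From HB Require Import structures.
From mathcomp Require Import all_boot all_order all_algebra.
From mathcomp Require Import reals classical_sets boolp topology normedtype.
From mathcomp Require Import ring lra.
Set Implicit Arguments. Unset Strict Implicit. Unset Printing Implicit Defensive.
Import Order.TTheory GRing.Theory Num.Theory.
Import numFieldNormedType.Exports.
Local Open Scope ring_scope.
Local Open Scope classical_set_scope.

(* DC functions are locally Lipschitz (a convex function is bounded on a small
   cube by its values at the vertices, hence Lipschitz on a smaller ball), so the
   Clarke calculus applies to f and g.  The Clarke directional derivative is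
   sublinear, and the sum rule  (f + g)°(y; v) <= f°(y; v) + g°(y; v)  together
   with a finite-dimensional Hahn-Banach sandwich splits every u in ∂(f + g)(y)
   as a + (u - a) with a in ∂f(y) and u - a in ∂g(y).
   Now let x_i -> x with (f + g)(x_i) > 0 = (f + g)(x) and u_i in ∂(f + g)(x_i)
   tend to 0 along a subsequence.  Split u_i = a_i + b_i; the a_i are bounded by
   a Lipschitz constant, so they cluster at some p, and by closedness of the graph
   of the Clarke subdifferential p is in ∂f(x) and -p in ∂g(x).  If p <> 0, f and g
   touch weakly at x.  If p = 0, both a_i and b_i get small; but f(x_i) > 0 or
   g(x_i) > 0, and weak regularity of 0 for that function bounds the
   corresponding subgradient away from 0. *)

Section DCSum.
Variables (R : realType) (d : nat).
Local Notation V := 'rV[R]_d.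
Implicit Types (C : V -> Prop) (F G f g : V -> R).

(** * Euclidean and max norms on R^d *)

Lemma coord_le_norm (v : V) i : `|v 0 i| <= `|v|.
Proof.
rewrite [leRHS]/Num.Def.normr /= mx_normrE; apply/bigmax_geP; right => /=.
by exists (0, i).
Qed.

Lemma norm_le_coord (v : V) M : 0 <= M -> (forall i, `|v 0 i| <= M) -> `|v| <= M.
Proof.
move=> M0 H; rewrite [leLHS]/Num.Def.normr /= mx_normrE.
by apply: bigmax_le => //= -[i j] _ /=; rewrite (ord1 i); exact: H.
Qed.

Lemma dotvDl (u w v : V) : dotv (u + w) v = dotv u v + dotv w v.
Proof. by rewrite /dotv -big_split; apply: eq_bigr => i _; rewrite mxE mulrDl. Qed.

Lemma dotvZl (c : R) (u v : V) : dotv (c *: u) v = c * dotv u v.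
Proof. by rewrite /dotv mulr_sumr; apply: eq_bigr => i _; rewrite mxE mulrA. Qed.

Lemma dotvNl (u v : V) : dotv (- u) v = - dotv u v.
Proof. by rewrite -scaleN1r dotvZl mulN1r. Qed.

Lemma dotvBl (u w v : V) : dotv (u - w) v = dotv u v - dotv w v.
Proof. by rewrite dotvDl dotvNl. Qed.

Lemma dotvC (u v : V) : dotv u v = dotv v u.
Proof. by apply: eq_bigr => i _; rewrite mulrC. Qed.

Lemma dotvDr (u w v : V) : dotv v (u + w) = dotv v u + dotv v w.
Proof. by rewrite dotvC dotvDl !(dotvC v). Qed.

Lemma dotvZr (c : R) (u v : V) : dotv v (c *: u) = c * dotv v u.
Proof. by rewrite dotvC dotvZl dotvC. Qed.

Lemma dotvNr (u v : V) : dotv v (- u) = - dotv v u.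
Proof. by rewrite dotvC dotvNl dotvC. Qed.

Lemma dotv0l (v : V) : dotv 0 v = 0.
Proof. by rewrite /dotv big1 // => i _; rewrite mxE mul0r. Qed.

Lemma dotv0r (v : V) : dotv v 0 = 0.
Proof. by rewrite dotvC dotv0l. Qed.

Lemma dotv_delta (u : V) k : dotv u (delta_mx 0 k) = u 0 k.
Proof.
rewrite /dotv (bigD1 k) //= big1 ?addr0; first by rewrite mxE !eqxx mulr1.
by move=> i /negbTE ik; rewrite mxE ik andbF mulr0.
Qed.

Lemma norm_delta_le1 k : `|delta_mx 0 k : V| <= 1.
Proof.
apply: norm_le_coord => // i; rewrite mxE eqxx /=.
by case: (i == k); rewrite ?normr1 ?normr0.
Qed.

Lemma norm_dotv_le (u v : V) : `|dotv u v| <= d.+1%:R * (`|u| * `|v|).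
Proof.
apply: (le_trans (ler_norm_sum _ _ _)).
apply: (@le_trans _ _ (\sum_(i < d) (`|u| * `|v|))).
  by apply: ler_sum => i _; rewrite normrM; apply: ler_pM => //; exact: coord_le_norm.
rewrite sumr_const card_ord -[X in X <= _]mulr_natl.
by apply: ler_wpM2r; [exact: mulr_ge0 | rewrite ler_nat].
Qed.

Lemma dotvv_ge0 (v : V) : 0 <= dotv v v.
Proof. by apply: sumr_ge0 => i _; rewrite -expr2 sqr_ge0. Qed.

Lemma enormN (v : V) : enorm (- v) = enorm v.
Proof. by rewrite /enorm dotvNl dotvNr opprK. Qed.

Lemma norm_le_enorm (v : V) : `|v| <= enorm v.
Proof.
apply: norm_le_coord; first exact: sqrtr_ge0.
move=> i; rewrite -sqrtr_sqr /enorm ler_sqrt; last exact: dotvv_ge0.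
rewrite /dotv (bigD1 i) //= -expr2 lerDl; apply: sumr_ge0 => j _.
by rewrite -expr2 sqr_ge0.
Qed.

Lemma enorm_le_norm (v : V) : enorm v <= d.+1%:R * `|v|.
Proof.
rewrite -[leRHS]ger0_norm ?mulr_ge0 // -sqrtr_sqr /enorm ler_sqrt ?sqr_ge0 //.
apply: (@le_trans _ _ (\sum_(i < d) (`|v| ^+ 2))).
  apply: ler_sum => i _; rewrite -expr2 -real_normK ?num_real //.
  by rewrite lerXn2r // ?nnegrE // coord_le_norm.
rewrite sumr_const card_ord exprMn -[X in X <= _]mulr_natl.
apply: ler_wpM2r; first exact: sqr_ge0.
by rewrite -natrX ler_nat (@leq_trans d.+1) // expnS leq_pmulr.
Qed.

(** * Local Lipschitz continuity of convex functions *)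

(* Balls are taken in the max norm [`|_|] of ['rV_d]; the Euclidean [enorm] of
   the definitions is within a factor [d.+1] of it (norm_le_enorm, enorm_le_norm). *)
Definition lipschitz_ball (C : V -> Prop) (F : V -> R) (y : V) (r L : R) :=
  [/\ 0 < r, 0 <= L, (forall z, `|z - y| < r -> C z) &
      forall z w, `|z - y| < r -> `|w - y| < r -> `|F z - F w| <= L * `|z - w|].

Lemma lipschitz_ball_shrink C F y r r' L :
  lipschitz_ball C F y r L -> 0 < r' -> r' <= r -> lipschitz_ball C F y r' L.
Proof.
case=> r0 L0 HC HL r'0 r'r; split => // [z zy|z w zy wy].
  by apply: HC; apply: lt_le_trans r'r.
by apply: HL; apply: lt_le_trans r'r.
Qed.

Lemma lipschitz_ball_recenter C F x y r L :
  lipschitz_ball C F x r L -> `|y - x| < r / 2 -> lipschitz_ball C F y (r / 2) L.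
Proof.
case=> r0 L0 HC HL yx.
have near_x z : `|z - y| < r / 2 -> `|z - x| < r.
  move=> zy; rewrite -(subrKA y) (le_lt_trans (ler_normD _ _)) //.
  by rewrite [r](splitr r) ltrD.
split => //; first by rewrite divr_gt0.
  by move=> z /near_x; apply: HC.
by move=> z w /near_x zx /near_x wx; apply: HL.
Qed.

Lemma lipschitz_ball_min C F G y r1 r2 L1 L2 :
  lipschitz_ball C F y r1 L1 -> lipschitz_ball C G y r2 L2 ->
  lipschitz_ball C F y (Num.min r1 r2) L1 /\ lipschitz_ball C G y (Num.min r1 r2) L2.
Proof.
move=> HF HG; have [r10 _ _ _] := HF; have [r20 _ _ _] := HG.
have m0 : 0 < Num.min r1 r2 by rewrite lt_min r10.
split; [apply: (lipschitz_ball_shrink HF) | apply: (lipschitz_ball_shrink HG)] => //.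
  by rewrite ge_min lexx.
by rewrite ge_min lexx orbT.
Qed.

Lemma open_norm_ball C x : is_open C -> C x ->
  exists2 r : R, 0 < r & forall z, `|z - x| <= r -> C z.
Proof.
move=> /(_ x) Ho /Ho [e e0 He]; have D0 : 0 < d.+1%:R :> R by [].
exists (e / (2 * d.+1%:R)); first by rewrite divr_gt0 // mulr_gt0.
move=> z zx; apply: He; apply: (le_lt_trans (enorm_le_norm _)).
have : d.+1%:R * `|z - x| <= d.+1%:R * (e / (2 * d.+1%:R)) by rewrite ler_pM2l.
have -> : d.+1%:R * (e / (2 * d.+1%:R)) = e / 2 :> R by field; rewrite nat1r pnatr_eq0.
lra.
Qed.

Definition set_coord (z : V) k (c : R) : V := z + (c - z 0 k) *: delta_mx 0 k.

Lemma set_coordE z k c i : set_coord z k c 0 i = if i == k then c else z 0 i.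
Proof.
rewrite !mxE eqxx /=; case: eqP => [->|_]; first by rewrite mulr1 addrC subrK.
by rewrite mulr0 addr0.
Qed.

Section ConvexLipschitz.
Variables (C : V -> Prop) (h : V -> R) (x : V) (r : R).
Hypothesis r_gt0 : 0 < r.
Hypothesis cube_in_C : forall z, `|z - x| <= r -> C z.
Hypothesis h_convex : convex_on C h.

Definition cube_vertex (b : {ffun 'I_d -> bool}) : V :=
  x + \row_i (if b i then r else - r).

Definition cube_max : R := \big[Num.max/h x]_b h (cube_vertex b).

Lemma set_coord_cube z k s : `|z - x| <= r -> `|s| = r ->
  `|set_coord z k (x 0 k + s) - x| <= r.
Proof.
move=> zx sr; apply: norm_le_coord => [|i]; first exact: ltW.
set w := set_coord _ _ _.
have -> : (w - x) 0 i = w 0 i - x 0 i by rewrite !mxE.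
rewrite set_coordE.
case: eqP => [->|_]; first by rewrite addrC addKr sr.
by apply: le_trans zx; have := coord_le_norm (z - x) i; rewrite !mxE.
Qed.

Lemma convex_le_coord_faces z k : `|z - x| <= r ->
  h z <= Num.max (h (set_coord z k (x 0 k + r))) (h (set_coord z k (x 0 k + - r))).
Proof.
move=> zx; set zp := set_coord _ _ _; set zm := set_coord _ _ _.
have rr : `|r| = r by rewrite gtr0_norm.
have Czp : C zp by apply/cube_in_C/set_coord_cube.
have Czm : C zm by apply/cube_in_C/set_coord_cube; rewrite ?normrN.
have /andP[zk1 zk2] : - r <= z 0 k - x 0 k <= r.
  rewrite -ler_norml; apply: le_trans zx.
  by have := coord_le_norm (z - x) k; rewrite !mxE.
pose lam := (z 0 k - x 0 k + r) / (2 * r).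
have lam0 : 0 <= lam by rewrite divr_ge0 //; lra.
have lam1 : lam <= 1 by rewrite ler_pdivrMr ?mulr_gt0 //; lra.
have -> : z = lam *: zp + (1 - lam) *: zm.
  apply/rowP => i.
  have -> : (lam *: zp + (1 - lam) *: zm) 0 i = lam * zp 0 i + (1 - lam) * zm 0 i.
    by rewrite !mxE.
  rewrite !set_coordE.
  case: eqP => [->|_]; last by ring.
  by rewrite /lam; field; exact: lt0r_neq0.
apply: (le_trans (h_convex Czp Czm lam0 lam1)).
have := le_max (h zp) (h zm) (h zp); have := le_max (h zm) (h zp) (h zm).
rewrite !lexx orbT [Num.max (h zm) _]maxC /= => hm hp; nra.
Qed.

Lemma convex_le_cube_max_faces k z : `|z - x| <= r ->
  (forall i : 'I_d, (k <= i)%N -> `|z 0 i - x 0 i| = r) -> h z <= cube_max.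
Proof.
elim: k z => [|k IH] z zx z_faces.
  pose b := [ffun i => x 0 i < z 0 i].
  have -> : z = cube_vertex b.
    apply/rowP => i; rewrite !mxE ffunE.
    have := z_faces i (leq0n _); case: ifP => xz nz.
      by rewrite ger0_norm ?subr_ge0 ?ltW // in nz; lra.
    move/negbT: xz; rewrite -leNgt -subr_le0 => xz.
    by rewrite ler0_norm // in nz; lra.
  exact: (le_bigmax _ (fun b => h (cube_vertex b)) b).
have [kd|dk] := ltnP k d; last first.
  by apply: IH => // i ki; move: (ltn_ord i); rewrite ltnNge (leq_trans dk ki).
pose kk : 'I_d := Ordinal kd.
have on_faces s : `|s| = r -> h (set_coord z kk (x 0 kk + s)) <= cube_max.
  move=> sr; apply: IH => [|i ki]; first exact: set_coord_cube.
  rewrite set_coordE; case: eqP => [->|/eqP ik]; first by rewrite addrC addKr.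
  apply: z_faces; rewrite ltn_neqAle ki andbT; apply: contra ik => /eqP ki'.
  by apply/eqP/val_inj; rewrite /= -ki'.
apply: (le_trans (convex_le_coord_faces kk zx)).
by rewrite ge_max !on_faces // ?normrN gtr0_norm.
Qed.

Lemma convex_le_cube_max z : `|z - x| <= r -> h z <= cube_max.
Proof.
move=> zx; apply: (@convex_le_cube_max_faces d) => // i di.
by move: (ltn_ord i); rewrite ltnNge di.
Qed.

Definition cube_bound : R := `|cube_max| + `|2 * h x - cube_max|.

Lemma convex_abs_le_cube_bound z : `|z - x| <= r -> `|h z| <= cube_bound.
Proof.
move=> zx; have up := convex_le_cube_max zx.
pose z' := x + (x - z).
have z'x : `|z' - x| <= r by rewrite /z' addrC addKr distrC.
have up' := convex_le_cube_max z'x.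
have lo : h x <= 2^-1 * h z + (1 - 2^-1) * h z'.
  have -> : x = 2^-1 *: z + (1 - 2^-1) *: z' by apply/rowP => i; rewrite !mxE; field.
  by apply: h_convex; [exact: cube_in_C | exact: cube_in_C | |]; lra.
rewrite ler_norml /cube_bound.
have := ler_norm cube_max; have := ler_norm (2 * h x - cube_max).
have := ler_norm (- (2 * h x - cube_max)); have := ler_norm (- cube_max).
rewrite !normrN => *; apply/andP; split; lra.
Qed.

(* Extend the segment from w through z by r/2 beyond z: convexity along it bounds the slope. *)
Lemma convex_sub_le z w : `|z - x| < r / 2 -> `|w - x| < r / 2 ->
  h z - h w <= 2 * cube_bound / (r / 2) * `|z - w|.
Proof.
move=> zx wx; have [->|zw] := eqVneq z w; first by rewrite !subrr normr0 mulr0.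
set s := r / 2 in zx wx *; have s0 : 0 < s by rewrite divr_gt0.
set D0 := `|z - w|; have D00 : 0 < D0 by rewrite normr_gt0 subr_eq0.
pose w' := z + (s / D0) *: (z - w).
have w'x : `|w' - x| <= r.
  rewrite /w' addrAC (le_trans (ler_normD _ _)) // normrZ gtr0_norm ?divr_gt0 //.
  by rewrite -/D0 mulfVK ?gt_eqF // /s in zx *; lra.
have wxr : `|w - x| <= r by apply/ltW/(lt_trans wx); rewrite /s ltr_pdivrMr // ltr_pMr // ltr1n.
pose beta := D0 / (D0 + s).
have b0 : 0 <= beta by rewrite divr_ge0 //; lra.
have b1 : beta <= 1 by rewrite ler_pdivrMr; lra.
have ez : z = beta *: w' + (1 - beta) *: w.
  by apply/rowP => i; rewrite !mxE /beta; field; rewrite !lt0r_neq0 //; lra.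
have hc : h z <= beta * h w' + (1 - beta) * h w.
  by rewrite {1}ez; apply: h_convex => //; apply: cube_in_C.
have := convex_abs_le_cube_bound w'x; have := convex_abs_le_cube_bound wxr.
rewrite !ler_norml => /andP[a1 a2] /andP[a3 a4].
have bD : beta <= D0 / s.
  by rewrite /beta; apply: ler_wpM2l; [lra | rewrite lef_pV2 ?posrE; lra].
have K0 : 0 <= cube_bound by rewrite /cube_bound addr_ge0.
have : beta * (h w' - h w) <= beta * (2 * cube_bound) by apply: ler_wpM2l => //; lra.
have : beta * (2 * cube_bound) <= D0 / s * (2 * cube_bound).
  by apply: ler_wpM2r => //; rewrite mulr_ge0.
have -> : 2 * cube_bound / s * D0 = D0 / s * (2 * cube_bound) by ring.
lra.
Qed.

Lemma convex_lipschitz_ball : lipschitz_ball C h x (r / 2) (2 * cube_bound / (r / 2)).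
Proof.
have K0 : 0 <= cube_bound by rewrite /cube_bound addr_ge0.
split; first by rewrite divr_gt0.
- by rewrite divr_ge0 ?mulr_ge0 ?invr_ge0 // ltW.
- by move=> z zx; apply: cube_in_C; have := r_gt0; lra.
move=> z w zx wx; rewrite ler_norml convex_sub_le // andbT.
by rewrite lerNl opprB distrC convex_sub_le.
Qed.

End ConvexLipschitz.

Lemma convex_lipschitz_near C h x : is_open C -> convex_on C h -> C x ->
  exists r L, lipschitz_ball C h x r L.
Proof.
move=> Co hc Cx; have [r r0 HC] := open_norm_ball Co Cx.
by exists (r / 2), (2 * cube_bound h x r / (r / 2)); exact: convex_lipschitz_ball.
Qed.

Lemma DC_lipschitz_near C F x : is_open C -> DC C F -> C x ->
  exists r L, lipschitz_ball C F x r L.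
Proof.
move=> Co [g [h [gc hc Fe]]] Cx.
have [r1 [L1 Lg]] := convex_lipschitz_near Co gc Cx.
have [r2 [L2 Lh]] := convex_lipschitz_near Co hc Cx.
have [[r0 L10 HC HL1] [_ L20 _ HL2]] := lipschitz_ball_min Lg Lh.
exists (Num.min r1 r2), (L1 + L2); split => // [|z w zy wy]; first exact: addr_ge0.
rewrite (Fe z (HC z zy)) (Fe w (HC w wy)).
have -> : g z - h z - (g w - h w) = (g z - g w) - (h z - h w) by ring.
by apply: (le_trans (ler_normB _ _)); rewrite mulrDl lerD ?HL1 ?HL2.
Qed.

(** * Sublinear functions and their linear minorants *)

Definition subadditive (s : V -> R) := forall v w, s (v + w) <= s v + s w.
Definition pos_homogeneous (s : V -> R) := forall lam v, 0 < lam -> lam * s v <= s (lam *: v).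

Lemma subadditive_ge0_at0 s : subadditive s -> 0 <= s 0.
Proof. by move=> H; have := H 0 0; rewrite addr0; lra. Qed.

Lemma sublinear_at0 s : subadditive s -> pos_homogeneous s -> s 0 = 0.
Proof.
move=> Hs Hh; have := subadditive_ge0_at0 Hs.
by have := Hh 2 0 (ltr0Sn _ 1); rewrite scaler0; lra.
Qed.

Definition vanish_from k (v : V) := forall i : 'I_d, (k <= i)%N -> v 0 i = 0.

Lemma vanish_fromD k v w : vanish_from k v -> vanish_from k w -> vanish_from k (v + w).
Proof. by move=> Hv Hw i ki; rewrite mxE Hv ?Hw ?addr0. Qed.

Lemma vanish_fromZ k c v : vanish_from k v -> vanish_from k (c *: v).
Proof. by move=> Hv i ki; rewrite mxE Hv ?mulr0. Qed.

Section Extension.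
Variables (s : V -> R) (k : nat) (kd : (k < d)%N) (a : V).
Hypotheses (s_subadd : subadditive s) (s_homog : pos_homogeneous s).
Hypothesis a_le_s : forall v, vanish_from k v -> dotv a v <= s v.
Local Notation e := (delta_mx 0 (Ordinal kd) : V).

Lemma minorant_gap w1 w2 : vanish_from k w1 -> vanish_from k w2 ->
  dotv a w1 - s (w1 - e) <= s (w2 + e) - dotv a w2.
Proof.
move=> H1 H2; have := a_le_s (vanish_fromD H1 H2); rewrite dotvDr.
by have := s_subadd (w1 - e) (w2 + e); rewrite addrACA addNr addr0; lra.
Qed.

Lemma vanish_from_split v : vanish_from k.+1 v ->
  vanish_from k (v - v 0 (Ordinal kd) *: e).
Proof.
move=> Hv i ki; rewrite !mxE; have [->|ik] := eqVneq i (Ordinal kd).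
  by rewrite !eqxx mulr1 subrr.
have ki' : (k < i)%N.
  rewrite ltn_neqAle ki andbT; apply: contra ik => /eqP ki'.
  by apply/eqP/val_inj; rewrite /= -ki'.
by rewrite (Hv i ki') andbF mulr0 subr0.
Qed.

Lemma minorant_extend_by (g : R) :
  (forall w, vanish_from k w -> dotv a w - s (w - e) <= g) ->
  (forall w, vanish_from k w -> g <= s (w + e) - dotv a w) ->
  forall v, vanish_from k.+1 v -> dotv (a + (g - a 0 (Ordinal kd)) *: e) v <= s v.
Proof.
move=> g_ge g_le v Hv; pose lam := v 0 (Ordinal kd); pose w := v - lam *: e.
have Hw : vanish_from k w := vanish_from_split Hv.
have ev : v = w + lam *: e by rewrite /w subrK.
have -> : dotv (a + (g - a 0 (Ordinal kd)) *: e) v = dotv a w + lam * g.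
  rewrite dotvDl dotvZl [dotv e v]dotvC dotv_delta {1}ev dotvDr dotvZr dotv_delta.
  by rewrite -/lam; ring.
rewrite ev; clearbody w lam.
have [ln|lp|->] := ltgtP lam 0; last by rewrite mul0r addr0 scale0r addr0 a_le_s.
- pose mu := - lam; have mu0 : 0 < mu by rewrite /mu oppr_gt0.
  have := g_ge (mu^-1 *: w) (vanish_fromZ _ Hw).
  have := s_homog (mu^-1 *: w - e) mu0.
  rewrite scalerDr scalerA mulfV ?gt_eqF // scale1r scalerN dotvZr.
  have -> : w - mu *: e = w + lam *: e by rewrite /mu scaleNr opprK.
  move=> H1 H2; have : mu * (mu^-1 * dotv a w - s (mu^-1 *: w - e)) <= mu * g.
    by rewrite ler_pM2l.
  have -> : mu * (mu^-1 * dotv a w - s (mu^-1 *: w - e)) =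
    dotv a w - mu * s (mu^-1 *: w - e) by field; apply: lt0r_neq0.
  by rewrite /mu in H1 *; lra.
- have := g_le (lam^-1 *: w) (vanish_fromZ _ Hw).
  have := s_homog (lam^-1 *: w + e) lp.
  rewrite scalerDr scalerA mulfV ?gt_eqF // scale1r dotvZr => H1 H2.
  have : lam * g <= lam * (s (lam^-1 *: w + e) - lam^-1 * dotv a w) by rewrite ler_pM2l.
  have -> : lam * (s (lam^-1 *: w + e) - lam^-1 * dotv a w) =
    lam * s (lam^-1 *: w + e) - dotv a w by field; apply: lt0r_neq0.
  lra.
Qed.

Lemma minorant_extend : exists a' : V, forall v, vanish_from k.+1 v -> dotv a' v <= s v.
Proof.
have W0 : vanish_from k 0 by move=> i _; rewrite mxE.
pose A := [set x | exists2 w, vanish_from k w & x = dotv a w - s (w - e)].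
have hsA : has_sup A.
  split; first by exists (dotv a 0 - s (0 - e)), 0.
  by exists (s (0 + e) - dotv a 0) => x [w1 H1 ->]; apply: minorant_gap.
exists (a + (sup A - a 0 (Ordinal kd)) *: e); apply: minorant_extend_by.
  by move=> w Hw; apply: sup_upper_bound => //; exists w.
move=> w Hw; apply: ge_sup; first by case: hsA.
by move=> x [w1 H1 ->]; apply: minorant_gap.
Qed.

End Extension.

(* Finite-dimensional Hahn-Banach, one coordinate at a time. *)
Lemma sublinear_minorant s : subadditive s -> pos_homogeneous s ->
  exists a : V, forall v, dotv a v <= s v.
Proof.
move=> Hs Hh.
have ext k : (k <= d)%N -> exists a : V, forall v, vanish_from k v -> dotv a v <= s v.
  elim: k => [_|k IH kd].
    exists 0 => v Hv; have -> : v = 0 by apply/rowP => i; rewrite Hv ?mxE.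
    by rewrite dotv0l subadditive_ge0_at0.
  by have [a Ha] := IH (ltnW kd); exact: (minorant_extend kd Hs Hh Ha).
have [a Ha] := ext d (leqnn d).
by exists a => v; apply: Ha => i; rewrite leqNgt ltn_ord.
Qed.

Section Sandwich.
Variables (p q : V -> R) (u : V).
Hypotheses (p_subadd : subadditive p) (p_homog : pos_homogeneous p).
Hypotheses (q_subadd : subadditive q) (q_homog : pos_homogeneous q).
Hypothesis u_le_pq : forall v, dotv u v <= p v + q v.

Definition infconv_term v w := p (v + w) + q w - dotv u w.
Definition infconv v := inf [set x | exists w, x = infconv_term v w].

Lemma has_inf_infconv v : has_inf [set x | exists w, x = infconv_term v w].
Proof.
split; first by exists (infconv_term v 0), 0.
exists (- p (- v)) => x [w ->]; rewrite /infconv_term.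
by have := u_le_pq w; have := p_subadd (v + w) (- v); rewrite addrAC subrr add0r; lra.
Qed.

Lemma infconv_le v w : infconv v <= infconv_term v w.
Proof. by apply: ge_inf; [case: (has_inf_infconv v) | exists w]. Qed.

Lemma infconv_adherent v e : 0 < e -> exists w, infconv_term v w < infconv v + e.
Proof. by move=> e0; have [_ [w ->] ?] := inf_adherent e0 (has_inf_infconv v); exists w. Qed.

Lemma infconv_subadd : subadditive infconv.
Proof.
move=> v1 v2; apply/ler_addgt0Pr => e e0; have e2 : 0 < e / 2 by rewrite divr_gt0.
have [w1 H1] := infconv_adherent v1 e2; have [w2 H2] := infconv_adherent v2 e2.
have := infconv_le (v1 + v2) (w1 + w2); rewrite /infconv_term in H1 H2 *.
have := p_subadd (v1 + w1) (v2 + w2); have := q_subadd w1 w2.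
by rewrite addrACA dotvDr; lra.
Qed.

Lemma infconv_homog : pos_homogeneous infconv.
Proof.
move=> lam v l0; apply: lb_le_inf; first by case: (has_inf_infconv (lam *: v)).
move=> x [w ->]; rewrite /infconv_term.
have := infconv_le v (lam^-1 *: w); rewrite /infconv_term dotvZr => H.
have := p_homog (v + lam^-1 *: w) l0; have := q_homog (lam^-1 *: w) l0.
rewrite scalerDr !scalerA mulfV ?gt_eqF // !scale1r => H1 H2.
have : lam * infconv v <= lam * (p (v + lam^-1 *: w) + q (lam^-1 *: w) - lam^-1 * dotv u w).
  by rewrite ler_pM2l.
have -> : lam * (p (v + lam^-1 *: w) + q (lam^-1 *: w) - lam^-1 * dotv u w) =
  lam * p (v + lam^-1 *: w) + lam * q (lam^-1 *: w) - dotv u w by field; apply: lt0r_neq0.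
lra.
Qed.

(* A linear minorant a of infconv satisfies  a v <= infconv_term v 0 = p v  and
   - a v <= infconv_term (- v) v = q v - u v. *)
Lemma sublinear_sum_split :
  exists a, (forall v, dotv a v <= p v) /\ (forall v, dotv (u - a) v <= q v).
Proof.
have [a Ha] := sublinear_minorant infconv_subadd infconv_homog.
exists a; split => v.
  apply: (le_trans (Ha v)); apply: (le_trans (infconv_le v 0)).
  by rewrite /infconv_term addr0 sublinear_at0 // dotv0r; lra.
have := le_trans (Ha (- v)) (infconv_le (- v) v).
by rewrite /infconv_term addNr sublinear_at0 // dotvNr dotvBl; lra.
Qed.

End Sandwich.

(** * The Clarke directional derivative *)

Definition diffq_set (C : V -> Prop) (F : V -> R) (y v : V) (del : R) : set R :=
  [set q | exists z t, [/\ C z /\ C (z + t *: v), `|z - y| < del, 0 < t,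
     t < del & q = (F (z + t *: v) - F z) / t]].

Definition diffq_sup C F y v del : R := sup (diffq_set C F y v del).

(* Keeps z and z + t v in the ball of radius r around y
   whenever |z - y| < del, t < del and del <= clarke_rad r v. *)
Definition clarke_rad (r : R) (v : V) : R := r / (2 * (1 + `|v|)).

(* The Clarke directional derivative limsup_{z -> y, t -> 0+}, as an infimum over del of suprema. *)
Definition clarke_dd C F y r v : R :=
  inf [set s | exists del, [/\ 0 < del, del <= clarke_rad r v & s = diffq_sup C F y v del]].

Section ClarkeLipschitz.
Variables (C : V -> Prop) (F : V -> R) (y : V) (r L : R).
Hypothesis F_lip : lipschitz_ball C F y r L.

Local Notation Q := (diffq_set C F y).
Local Notation S := (diffq_sup C F y).
Local Notation fo := (clarke_dd C F y r).
Local Notation rad := (clarke_rad r).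

Lemma clarke_rad_gt0 v : 0 < rad v.
Proof. by case: F_lip => r0 *; rewrite divr_gt0 // mulr_gt0 // ltr_pwDl. Qed.

Lemma diffq_pts_in_ball v del z t : del <= rad v -> `|z - y| < del -> 0 < t -> t < del ->
  `|z - y| < r /\ `|z + t *: v - y| < r.
Proof.
move=> dr zy t0 td; have [r0 _ _ _] := F_lip; have nv := normr_ge0 v.
have e : (1 + `|v|) * rad v = r / 2 by rewrite /clarke_rad; field; rewrite lt0r_neq0 // ltr_pwDl.
have H1 : `|z + t *: v - y| <= `|z - y| + t * `|v|.
  by rewrite addrAC (le_trans (ler_normD _ _)) // normrZ gtr0_norm.
have H2 : t * `|v| <= del * `|v| by apply: ler_wpM2r => //; apply: ltW.
have H3 : (1 + `|v|) * del <= (1 + `|v|) * rad v by apply: ler_wpM2l => //; lra.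
split; nra.
Qed.

Lemma diffq_bound v del q : del <= rad v -> Q v del q -> `|q| <= L * `|v|.
Proof.
move=> dr [z [t [[Cz Czt] zy t0 td ->]]].
have [zr ztr] := diffq_pts_in_ball dr zy t0 td; have [_ L0 _ HL] := F_lip.
rewrite normrM normfV (gtr0_norm t0) ler_pdivrMr //.
apply: (le_trans (HL _ _ ztr zr)).
by rewrite [z + _]addrC addrK normrZ (gtr0_norm t0) [t * _]mulrC mulrA.
Qed.

Lemma diffq_set_neq0 v del : 0 < del -> del <= rad v -> Q v del !=set0.
Proof.
move=> d0 dr; have [r0 _ HC _] := F_lip.
have t0 : 0 < del / 2 by rewrite divr_gt0.
have td : del / 2 < del by rewrite ltr_pdivrMr // ltr_pMr // ltr1n.
have yy : `|y - y| < del by rewrite subrr normr0.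
have [yr ytr] := diffq_pts_in_ball dr yy t0 td.
by eexists; exists y, (del / 2); split; [split; apply: HC | | | |].
Qed.

Lemma has_sup_diffq v del : 0 < del -> del <= rad v -> has_sup (Q v del).
Proof.
move=> d0 dr; split; first exact: diffq_set_neq0.
by exists (L * `|v|) => q /(diffq_bound dr); rewrite ler_norml => /andP[].
Qed.

Lemma diffq_le_sup v del q : 0 < del -> del <= rad v -> Q v del q -> q <= S v del.
Proof. by move=> d0 dr Hq; apply: sup_upper_bound => //; apply: has_sup_diffq. Qed.

Lemma diffq_sup_le v del : 0 < del -> del <= rad v -> S v del <= L * `|v|.
Proof.
move=> d0 dr; apply: ge_sup; first exact: diffq_set_neq0.
by move=> q /(diffq_bound dr); rewrite ler_norml => /andP[].
Qed.

Lemma diffq_sup_adherent v del eps : 0 < del -> del <= rad v -> 0 < eps ->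
  exists2 q, Q v del q & S v del - eps < q.
Proof. by move=> d0 dr e0; apply: sup_adherent => //; apply: has_sup_diffq. Qed.

Lemma has_inf_diffq_sups v :
  has_inf [set s | exists del, [/\ 0 < del, del <= rad v & s = S v del]].
Proof.
split; first by exists (S v (rad v)), (rad v); split => //; apply: clarke_rad_gt0.
exists (- (L * `|v|)) => s [del [d0 dr ->]].
have [q Hq] := diffq_set_neq0 d0 dr; apply: le_trans (diffq_le_sup d0 dr Hq).
by have := diffq_bound dr Hq; rewrite ler_norml => /andP[].
Qed.

Lemma clarke_dd_le_sup v del : 0 < del -> del <= rad v -> fo v <= S v del.
Proof. by move=> d0 dr; apply: ge_inf; [case: (has_inf_diffq_sups v) | exists del]. Qed.

Lemma clarke_dd_adherent v eps : 0 < eps ->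
  exists del, [/\ 0 < del, del <= rad v & S v del < fo v + eps].
Proof.
by move=> e0; have [_ [del [d0 dr ->]] ?] := inf_adherent e0 (has_inf_diffq_sups v); exists del.
Qed.

Lemma clarke_dd_le v : fo v <= L * `|v|.
Proof.
have r0 := clarke_rad_gt0 v.
exact: le_trans (clarke_dd_le_sup r0 (lexx _)) (diffq_sup_le r0 (lexx _)).
Qed.

Lemma clarke_subdiffE u : clarke_subdiff C F y u <-> C y /\ forall v, dotv u v <= fo v.
Proof.
split=> [[Cy Hu]|[Cy Hu]]; split=> // v.
  apply: lb_le_inf; first by case: (has_inf_diffq_sups v).
  move=> s [del [d0 dr ->]]; apply/ler_addgt0Pr => e e0.
  have [z [t [[Cz Czt] zy t0 td Hq]]] := Hu v e del e0 d0.
  have Q_zt : Q v del ((F (z + t *: v) - F z) / t).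
    by exists z, t; split => //; apply: le_lt_trans zy; exact: norm_le_enorm.
  by have := diffq_le_sup d0 dr Q_zt; lra.
move=> eps del e0 d0; have D0 : 0 < d.+1%:R :> R by [].
pose del' := Num.min (del / d.+1%:R) (rad v).
have d'0 : 0 < del' by rewrite lt_min divr_gt0 // clarke_rad_gt0.
have d'r : del' <= rad v by rewrite ge_min lexx orbT.
have d'd : del' <= del / d.+1%:R by rewrite ge_min lexx.
have [q [z [t [[Cz Czt] zy t0 td ->]]] Hq] := diffq_sup_adherent d'0 d'r e0.
have := clarke_dd_le_sup d'0 d'r; have := Hu v => H1 H2.
have delD : del / d.+1%:R <= del.
  by rewrite ler_pdivrMr // ler_peMr ?ler1n //; apply: ltW.
exists z, t; split => //; [|exact: lt_le_trans td (le_trans d'd delD)|lra].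
apply: (le_lt_trans (enorm_le_norm _)).
have : d.+1%:R * `|z - y| < d.+1%:R * del' by rewrite ltr_pM2l.
have : d.+1%:R * del' <= d.+1%:R * (del / d.+1%:R) by rewrite ler_pM2l.
by rewrite mulrCA mulfV ?gt_eqF // mulr1; lra.
Qed.

Lemma clarke_dd_subadd : subadditive fo.
Proof.
move=> v w; apply/ler_addgt0Pr => e e0; have e20 : 0 < e / 2 by rewrite divr_gt0.
have [d1 [d10 d1r H1]] := clarke_dd_adherent v e20.
have [d2 [d20 d2r H2]] := clarke_dd_adherent w e20.
have nw := normr_ge0 w; have w1 : 0 < 1 + `|w| by lra.
pose m := Num.min d1 d2; pose del := Num.min (m / (1 + `|w|)) (rad (v + w)).
have m0 : 0 < m by rewrite lt_min d10 d20.
have dl0 : 0 < del by rewrite lt_min divr_gt0 // clarke_rad_gt0.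
have dlr : del <= rad (v + w) by rewrite ge_min lexx orbT.
have dlm : del * (1 + `|w|) <= m by rewrite -ler_pdivlMr // ge_min lexx.
have m1 : m <= d1 by rewrite ge_min lexx.
have m2 : m <= d2 by rewrite ge_min lexx orbT.
have dl1 : del <= del * (1 + `|w|) by rewrite ler_peMr //; [apply: ltW | lra].
have [_ _ HC _] := F_lip.
suff : S (v + w) del <= S v d1 + S w d2 by have := clarke_dd_le_sup dl0 dlr; lra.
apply: ge_sup; first exact: diffq_set_neq0.
move=> q [z [t [[Cz Czt] zy t0 td ->]]].
(* Split the step along v + w into a step along w followed by a step along v. *)
pose z' := z + t *: w.
have zyd2 : `|z - y| < d2 by lra.
have td2 : t < d2 by lra.
have [_ Cz'r] := diffq_pts_in_ball d2r zyd2 t0 td2.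
have ez : z + t *: (v + w) = z' + t *: v by rewrite /z' scalerDr addrAC addrA.
have Qw : Q w d2 ((F z' - F z) / t) by exists z, t; split => //; split => //; apply: HC.
have z'y : `|z' - y| < d1.
  rewrite /z' addrAC (le_lt_trans (ler_normD _ _)) // normrZ gtr0_norm //.
  have : t * `|w| <= del * `|w| by apply: ler_wpM2r => //; apply: ltW.
  lra.
have Qv : Q v d1 ((F (z' + t *: v) - F z') / t).
  exists z', t; split => //; last lra.
  by split; [apply: HC | rewrite -ez].
have := diffq_le_sup d10 d1r Qv; have := diffq_le_sup d20 d2r Qw.
rewrite ez; have -> : (F (z' + t *: v) - F z) / t =
   (F (z' + t *: v) - F z') / t + (F z' - F z) / t by field; apply: lt0r_neq0.
lra.
Qed.

Lemma clarke_dd_homog : pos_homogeneous fo.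
Proof.
move=> lam v l0; apply: lb_le_inf; first by case: (has_inf_diffq_sups (lam *: v)).
move=> s [del [d0 dr ->]].
pose del' := Num.min (Num.min del (lam * del)) (rad v).
have d'0 : 0 < del' by rewrite !lt_min d0 mulr_gt0 // clarke_rad_gt0.
have d'r : del' <= rad v by rewrite ge_min lexx orbT.
have d'1 : del' <= del by rewrite !ge_min lexx.
have d'2 : del' <= lam * del by rewrite !ge_min lexx orbT.
apply: (@le_trans _ _ (lam * S v del')); first by rewrite ler_pM2l // clarke_dd_le_sup.
apply/ler_addgt0Pr => e e0; have el0 : 0 < e / lam by rewrite divr_gt0.
have [q [z [t [Cz zy t0 td ->]]] Hq] := diffq_sup_adherent d'0 d'r el0.
have Q_lam : Q (lam *: v) del (lam * ((F (z + t *: v) - F z) / t)).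
  exists z, (t / lam); split.
  - by rewrite scalerA mulfVK ?gt_eqF.
  - exact: lt_le_trans zy d'1.
  - by rewrite divr_gt0.
  - by rewrite ltr_pdivrMr // mulrC; apply: lt_le_trans td d'2.
  - by rewrite scalerA mulfVK ?gt_eqF //; field; apply/andP; split; apply: lt0r_neq0.
have H := diffq_le_sup d0 dr Q_lam.
have : lam * (S v del' - e / lam) < lam * ((F (z + t *: v) - F z) / t) by rewrite ltr_pM2l.
have -> : lam * (S v del' - e / lam) = lam * S v del' - e by field; apply: lt0r_neq0.
lra.
Qed.

End ClarkeLipschitz.

Lemma clarke_subdiffD_dotv_le C F G y r L1 L2 u :
  lipschitz_ball C F y r L1 -> lipschitz_ball C G y r L2 ->
  clarke_subdiff C (fun x => F x + G x) y u ->
  forall v, dotv u v <= clarke_dd C F y r v + clarke_dd C G y r v.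
Proof.
move=> HF HG [Cy Hu] v; apply/ler_addgt0Pr => e e0.
have e30 : 0 < e / 3 by rewrite divr_gt0.
have [d1 [d10 d1r H1]] := clarke_dd_adherent HF v e30.
have [d2 [d20 d2r H2]] := clarke_dd_adherent HG v e30.
pose del := Num.min d1 d2.
have dl0 : 0 < del by rewrite lt_min d10 d20.
have m1 : del <= d1 by rewrite ge_min lexx.
have m2 : del <= d2 by rewrite ge_min lexx orbT.
have [z [t [[Cz Czt] zy t0 td Hq]]] := Hu v (e / 3) del e30 dl0.
have zy' : `|z - y| < del by apply: le_lt_trans (norm_le_enorm _) zy.
have QF : diffq_set C F y v d1 ((F (z + t *: v) - F z) / t) by exists z, t; split => //; lra.
have QG : diffq_set C G y v d2 ((G (z + t *: v) - G z) / t) by exists z, t; split => //; lra.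
have := diffq_le_sup HF d10 d1r QF; have := diffq_le_sup HG d20 d2r QG.
have E : (F (z + t *: v) + G (z + t *: v) - (F z + G z)) / t =
  (F (z + t *: v) - F z) / t + (G (z + t *: v) - G z) / t by field; apply: lt0r_neq0.
by rewrite E in Hq; lra.
Qed.

(** * Calculus of Clarke subgradients *)

Lemma clarke_subdiffD_split C F G y r L1 L2 u :
  lipschitz_ball C F y r L1 -> lipschitz_ball C G y r L2 ->
  clarke_subdiff C (fun x => F x + G x) y u ->
  exists a, clarke_subdiff C F y a /\ clarke_subdiff C G y (u - a).
Proof.
move=> HF HG Hu; have Cy := Hu.1.
have [a [Ha1 Ha2]] := sublinear_sum_split (clarke_dd_subadd HF) (clarke_dd_homog HF)
  (clarke_dd_subadd HG) (clarke_dd_homog HG) (clarke_subdiffD_dotv_le HF HG Hu).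
by exists a; split; [apply/(clarke_subdiffE HF) | apply/(clarke_subdiffE HG)].
Qed.

Lemma clarke_subdiff_norm_le C F y r L a :
  lipschitz_ball C F y r L -> clarke_subdiff C F y a -> `|a| <= L.
Proof.
move=> HL /(clarke_subdiffE HL) [_ Ha]; have [_ L0 _ _] := HL.
have le_L v : `|v| <= 1 -> dotv a v <= L.
  move=> v1; apply: (le_trans (Ha v)); apply: (le_trans (clarke_dd_le HL v)).
  by rewrite -[leRHS]mulr1 ler_wpM2l.
apply: norm_le_coord => // i; rewrite ler_norml.
have := le_L _ (norm_delta_le1 i); have := le_L (- delta_mx 0 i).
by rewrite normrN dotvNr dotv_delta => /(_ (norm_delta_le1 i)) H1 H2; apply/andP; split; lra.
Qed.

Lemma clarke_subdiffD_split_near C F G x y r L1 L2 u :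
  lipschitz_ball C F x r L1 -> lipschitz_ball C G x r L2 -> `|y - x| < r / 2 ->
  clarke_subdiff C (fun x => F x + G x) y u ->
  exists a, [/\ clarke_subdiff C F y a, clarke_subdiff C G y (u - a) & `|a| <= L1].
Proof.
move=> HF HG yx Hu.
have HFy := lipschitz_ball_recenter HF yx; have HGy := lipschitz_ball_recenter HG yx.
have [a [Ha Hb]] := clarke_subdiffD_split HFy HGy Hu.
by exists a; split => //; apply: clarke_subdiff_norm_le HFy Ha.
Qed.

Lemma enorm_sub_le_weak (x y z : V) :
  enorm (z - x) <= d.+1%:R * (enorm (z - y) + enorm (y - x)).
Proof.
apply: (le_trans (enorm_le_norm _)); rewrite ler_pM2l //.
rewrite -(subrKA y) (le_trans (ler_normD _ _)) //.
by apply: lerD; apply: norm_le_enorm.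
Qed.

Lemma dotv_le_near (a p v : V) e : `|a - p| <= e ->
  dotv p v <= dotv a v + d.+1%:R * e * `|v|.
Proof.
move=> ap; have := norm_dotv_le (a - p) v; rewrite dotvBl ler_norml => /andP[H _].
have : d.+1%:R * (`|a - p| * `|v|) <= d.+1%:R * e * `|v|.
  by rewrite -mulrA ler_pM2l // ler_wpM2r.
lra.
Qed.

Lemma clarke_subdiff_closed C F x p : C x ->
  (forall e, 0 < e -> exists y a, [/\ clarke_subdiff C F y a, enorm (y - x) < e & `|a - p| < e]) ->
  clarke_subdiff C F x p.
Proof.
move=> Cx near_p; split => // v eps del e0 d0.
have D0 : 0 < d.+1%:R :> R by []; have nv := normr_ge0 v.
pose c := d.+1%:R * (1 + `|v|).
have c0 : 0 < c by rewrite mulr_gt0 //; lra.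
pose del' := del / (2 * d.+1%:R).
have d'0 : 0 < del' by rewrite divr_gt0 // mulr_gt0.
pose e1 := Num.min del' (eps / (2 * c)).
have e10 : 0 < e1 by rewrite lt_min d'0 divr_gt0 // mulr_gt0.
have [y [a [Ha yx ap]]] := near_p e1 e10.
have e2 : 0 < eps / 2 by rewrite divr_gt0.
have [z [t [Cz zy t0 td Hq]]] := Ha.2 v (eps / 2) del' e2 d'0.
exists z, t; split => //.
- apply: (le_lt_trans (enorm_sub_le_weak x y z)).
  have : enorm (y - x) < del' by apply: lt_le_trans yx _; rewrite ge_min lexx.
  have -> : del = d.+1%:R * (del' + del') by rewrite /del'; field; rewrite nat1r pnatr_eq0.
  by move=> yx'; rewrite ltr_pM2l // ltrD.
- apply: lt_le_trans td _; rewrite ler_pdivrMr ?mulr_gt0 // ler_peMr ?(ltW d0) //.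
  have : (1 : R) <= d.+1%:R by rewrite ler1n.
  lra.
- have : d.+1%:R * e1 * `|v| <= d.+1%:R * (eps / (2 * c)) * `|v|.
    by rewrite ler_wpM2r // ler_pM2l // ge_min lexx orbT.
  have -> : d.+1%:R * (eps / (2 * c)) * `|v| = eps / 2 * (`|v| / (1 + `|v|)).
    by rewrite /c; field; rewrite nat1r pnatr_eq0 /= lt0r_neq0 //; lra.
  have : eps / 2 * (`|v| / (1 + `|v|)) <= eps / 2.
    by rewrite ler_piMr ?(ltW e2) // ler_pdivrMr; lra.
  by have := dotv_le_near v (ltW ap); lra.
Qed.

(** * Weak regularity along sequences *)

Definition inv_succ (k : nat) : R := (k.+1%:R)^-1.

Lemma inv_succ_gt0 k : 0 < inv_succ k.
Proof. by rewrite invr_gt0 ltr0n. Qed.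

Lemma inv_succ_small (e : R) : 0 < e -> exists N, forall k, (N <= k)%N -> inv_succ k < e.
Proof.
move=> e0; exists (Num.bound (e^-1)) => k Nk.
have : 0 < e^-1 by rewrite invr_gt0.
move=> /ltW /archi_boundP H.
rewrite /inv_succ -[e]invrK ltf_pV2 ?posrE ?invr_gt0 ?ltr0n //.
by apply: (lt_le_trans H); rewrite ler_nat; exact: leq_trans Nk _.
Qed.

Lemma weakly_regular0_nbhs_bound C F x : weakly_regular_value C F 0 -> C x -> F x = 0 ->
  exists m del, [/\ 0 < m, 0 < del & forall y a, C y -> enorm (y - x) < del ->
    0 < F y -> clarke_subdiff C F y a -> m <= enorm a].
Proof.
move=> WR Cx Fx; apply: contrapT => no_bound.
have bad k : exists ya : V * V, [/\ C ya.1, enorm (ya.1 - x) < inv_succ k, 0 < F ya.1,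
    clarke_subdiff C F ya.1 ya.2 & enorm ya.2 < inv_succ k].
  apply: contrapT => Hk; apply: no_bound; exists (inv_succ k), (inv_succ k).
  split; try exact: inv_succ_gt0.
  move=> y a Cy yx Fy Ha; rewrite leNgt; apply/negP => lt; apply: Hk.
  by exists (y, a); split.
have [YA HYA] := choice bad.
have [|||||m m0 [N HN]] := WR (fun k => (YA k).1) x (fun k => (YA k).2) Cx => //.
- by move=> k; case: (HYA k).
- move=> e e0; have [N HN] := inv_succ_small e0; exists N => k Nk.
  by case: (HYA k) => _ H1 _ _ _; apply: lt_trans H1 (HN _ Nk).
- by move=> k; case: (HYA k).
- by move=> k; case: (HYA k).
have [N' HN'] := inv_succ_small m0; pose k := maxn N N'.
have := HN k (leq_maxl _ _); have := HN' k (leq_maxr _ _).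
by case: (HYA k) => _ _ _ _; lra.
Qed.

Lemma bounded_rV_cluster (A : nat -> V) L : (forall k, `|A k| <= L) ->
  exists p, forall e, 0 < e -> forall K, exists k, (K <= k)%N /\ `|A k - p| < e.
Proof.
move=> A_le; pose S := [set v : V | forall i, `[- L, L]%classic (v ord0 i)].
have cS : compact S.
  by apply: (@rV_compact _ _ (fun=> `[- L, L]%classic)) => _; apply: segment_compact.
have FS : (A @ \oo) S.
  exists 0%N => // k _ /= i; rewrite /= in_itv /= -ler_norml.
  by apply: le_trans (A_le k); have := coord_le_norm (A k) i.
have [p [_ Cp]] := cS _ (fmap_proper_filter A eventually_filter) FS.
exists p => e e0 K.
have FB : (A @ \oo) [set v | exists2 k, (K <= k)%N & v = A k] by exists K => // k /= Kk; exists k.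
have [_ [[k Kk ->] Bk]] := Cp _ _ FB (nbhsx_ballx p e e0).
by exists k; split => //; rewrite distrC; move: Bk; rewrite -ball_normE.
Qed.

Lemma not_liminf_pos_subseq (rs : nat -> R) (xs : nat -> V) x (eps : nat -> R) :
  ~ liminf_pos rs -> Defs.cvg_to xs x -> (forall k, 0 < eps k) ->
  exists phi : nat -> nat, forall k, enorm (xs (phi k) - x) < eps k /\ rs (phi k) < eps k.
Proof.
move=> not_pos cvg eps0.
suff /choice[phi] : forall k, exists i, enorm (xs i - x) < eps k /\ rs i < eps k by exists phi.
move=> k; have [N HN] := cvg _ (eps0 k); apply: contrapT => none; apply: not_pos.
exists (eps k) => //; exists N => i Ni; rewrite leNgt; apply/negP => lt.
by apply: none; exists i; split => //; apply: HN.
Qed.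

(** * Sums of nonnegative DC functions *)

Lemma subgrad_split_lower_bound C f g x :
  (forall y, C y -> 0 <= f y) -> (forall y, C y -> 0 <= g y) ->
  weakly_regular_value C f 0 -> weakly_regular_value C g 0 ->
  C x -> f x = 0 -> g x = 0 ->
  exists2 e, 0 < e & forall y a u, C y -> enorm (y - x) < e -> 0 < f y + g y ->
    clarke_subdiff C f y a -> clarke_subdiff C g y (u - a) -> e <= `|a| \/ e <= `|u|.
Proof.
move=> f0 g0 WRf WRg Cx fx gx.
have [mf [df [mf0 df0 f_lb]]] := weakly_regular0_nbhs_bound WRf Cx fx.
have [mg [dg [mg0 dg0 g_lb]]] := weakly_regular0_nbhs_bound WRg Cx gx.
have D0 : 0 < d.+1%:R :> R by [].
pose m := Num.min mf mg; pose e := Num.min (Num.min df dg) (m / (2 * d.+1%:R)).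
exists e; first by rewrite !lt_min df0 dg0 divr_gt0 ?mulr_gt0 ?lt_min ?mf0.
move=> y a u Cy ye fgy Ha Hb.
have /andP[ydf ydg] : (enorm (y - x) < df) && (enorm (y - x) < dg).
  by move: ye; rewrite !lt_min => /andP[].
have e_m : e <= m / (2 * d.+1%:R) by rewrite ge_min lexx orbT.
suff mD : m <= d.+1%:R * (`|a| + `|u|).
  have [ae|ae] := leP e `|a|; [by left | right].
  rewrite leNgt; apply/negP => ue; move: mD; apply/negP; rewrite -ltNge.
  have -> : m = d.+1%:R * (m / (2 * d.+1%:R) + m / (2 * d.+1%:R)).
    by field; rewrite nat1r pnatr_eq0.
  by rewrite ltr_pM2l // ltrD // (lt_le_trans _ e_m).
have na := normr_ge0 a; have nu := normr_ge0 u.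
have [fy|fy] := ltrP 0 (f y).
  have := f_lb y a Cy ydf fy Ha; have := enorm_le_norm a.
  have : m <= mf by rewrite ge_min lexx.
  have : d.+1%:R * `|a| <= d.+1%:R * (`|a| + `|u|) by rewrite ler_pM2l // lerDl.
  lra.
have gy : 0 < g y by have := f0 y Cy; lra.
have := g_lb y (u - a) Cy ydg gy Hb; have := enorm_le_norm (u - a).
have : m <= mg by rewrite ge_min lexx orbT.
have : d.+1%:R * `|u - a| <= d.+1%:R * (`|a| + `|u|).
  by rewrite ler_pM2l // [`|a| + _]addrC ler_normB.
lra.
Qed.

Lemma subgrad_split_limit C f g x r L1 L2 (ys us : nat -> V) :
  lipschitz_ball C f x r L1 -> lipschitz_ball C g x r L2 -> C x ->
  (forall k, enorm (ys k - x) < Num.min (inv_succ k) (r / 2)) ->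
  (forall k, enorm (us k) < inv_succ k) ->
  (forall k, clarke_subdiff C (fun y => f y + g y) (ys k) (us k)) ->
  exists p, [/\ clarke_subdiff C f x p, clarke_subdiff C g x (- p) &
    forall e, 0 < e -> exists k a, [/\ inv_succ k < e, clarke_subdiff C f (ys k) a,
      clarke_subdiff C g (ys k) (us k - a) & `|a - p| < e]].
Proof.
move=> Lf Lg Cx ys_x us_small us_sub.
have ys_near k : enorm (ys k - x) < inv_succ k /\ `|ys k - x| < r / 2.
  have := ys_x k; rewrite lt_min => /andP[H1 H2].
  by split => //; apply: le_lt_trans (norm_le_enorm _) H2.
have /choice[A HA] k : exists a, [/\ clarke_subdiff C f (ys k) a,
    clarke_subdiff C g (ys k) (us k - a) & `|a| <= L1].
  exact: clarke_subdiffD_split_near Lf Lg (ys_near k).2 (us_sub k).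
have [p Hp] : exists p, forall e, 0 < e -> forall K, exists k, (K <= k)%N /\ `|A k - p| < e.
  by apply: bounded_rV_cluster (L1) _ => k; case: (HA k).
have near_p e : 0 < e -> exists k, inv_succ k < e /\ `|A k - p| < e.
  move=> e0; have [K HK] := inv_succ_small e0; have [k [Kk Hk]] := Hp e e0 K.
  by exists k; split => //; apply: HK.
exists p; split.
- apply: clarke_subdiff_closed Cx _ => e e0; have [k [ke Ak]] := near_p e e0.
  exists (ys k), (A k); split; first by case: (HA k).
    exact: lt_trans (ys_near k).1 ke.
  exact: Ak.
- apply: clarke_subdiff_closed Cx _ => e e0; have e20 : 0 < e / 2 by rewrite divr_gt0.
  have [k [ke Ak]] := near_p (e / 2) e20.
  exists (ys k), (us k - A k); split; first by case: (HA k).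
    by apply: lt_trans (ys_near k).1 (lt_trans ke _); rewrite ltr_pdivrMr // ltr_pMr // ltr1n.
  rewrite opprK -addrA [- A k + p]addrC -opprB (le_lt_trans (ler_normB _ _)) //.
  have := norm_le_enorm (us k); have := us_small k; lra.
- move=> e e0; have [k [ke Ak]] := near_p e e0.
  by exists k, (A k); case: (HA k).
Qed.

Lemma convex_onD C f g : convex_on C f -> convex_on C g -> convex_on C (fun x => f x + g x).
Proof.
move=> cf cg x y t Cx Cy t0 t1.
by have := cf x y t Cx Cy t0 t1; have := cg x y t Cx Cy t0 t1; rewrite !mulrDr; lra.
Qed.

Lemma DCD C f g : DC C f -> DC C g -> DC C (fun x => f x + g x).
Proof.
move=> [f1 [f2 [cf1 cf2 ef]]] [g1 [g2 [cg1 cg2 eg]]].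
exists (fun x => f1 x + g1 x), (fun x => f2 x + g2 x); split; try exact: convex_onD.
by move=> x Cx; rewrite ef // eg //; ring.
Qed.

Lemma weakly_regular0D C f g : is_open C ->
  (forall x, C x -> 0 <= f x) -> (forall x, C x -> 0 <= g x) -> DC C f -> DC C g ->
  weakly_regular_value C f 0 -> weakly_regular_value C g 0 -> ~ touch_weakly C f g ->
  weakly_regular_value C (fun x => f x + g x) 0.
Proof.
move=> Co f0 g0 DCf DCg WRf WRg no_touch xs x us Cx Cxs xs_x fg_pos fgx us_sub.
have fx : f x = 0 by have := f0 x Cx; have := g0 x Cx; lra.
have gx : g x = 0 by have := f0 x Cx; have := g0 x Cx; lra.
apply: contrapT => us_small.
have [r1 [L1 Lf]] := DC_lipschitz_near Co DCf Cx.
have [r2 [L2 Lg]] := DC_lipschitz_near Co DCg Cx.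
have [Lf' Lg'] := lipschitz_ball_min Lf Lg; have [r0 _ _ _] := Lf'.
have rate_gt0 k : 0 < Num.min (inv_succ k) (Num.min r1 r2 / 2).
  by rewrite lt_min inv_succ_gt0 divr_gt0.
have [phi Hphi] := not_liminf_pos_subseq us_small xs_x rate_gt0.
have us_phi k : enorm (us (phi k)) < inv_succ k.
  by apply: lt_le_trans (Hphi k).2 _; rewrite ge_min lexx.
have [p [fp gp near_p]] := subgrad_split_limit Lf' Lg' Cx (fun k => (Hphi k).1) us_phi
  (fun k => us_sub (phi k)).
have [p0|pn0] := eqVneq p 0; last first.
  apply: no_touch; exists x, ((enorm p)^-1 *: p); split; split => //; split => //.
    by exists p.
  by exists (- p); split; rewrite ?oppr_eq0 ?enormN ?scalerN.
have [e e0 lb] := subgrad_split_lower_bound f0 g0 WRf WRg Cx fx gx.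
have [k [a [ke Ha Hb ap]]] := near_p e e0.
have yx : enorm (xs (phi k) - x) < e.
  by apply: lt_trans ke; apply: lt_le_trans (Hphi k).1 _; rewrite ge_min lexx.
have uk : `|us (phi k)| < e by apply: le_lt_trans (norm_le_enorm _) (lt_trans (us_phi k) ke).
rewrite p0 subr0 in ap.
by case: (lb _ _ _ (Cxs _) yx (fg_pos _) Ha Hb); rewrite leNgt ?ap ?uk.
Qed.

End DCSum.

Theorem lemma2p14 (R : realType) (d : nat) (C : 'rV[R]_d -> Prop)
    (f g : 'rV[R]_d -> R) :
  is_open C -> is_convex C ->
  (forall x, C x -> 0 <= f x) -> (forall x, C x -> 0 <= g x) ->
  DC C f -> DC C g ->
  weakly_regular_value C f 0 -> weakly_regular_value C g 0 ->
  ~ touch_weakly C f g ->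
  DC C (fun x => f x + g x) /\ weakly_regular_value C (fun x => f x + g x) 0.
Proof.
move=> Co _ f0 g0 DCf DCg WRf WRg no_touch.
by split; [exact: DCD | exact: weakly_regular0D].
Qed.
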